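(* Let $k\ge 2$ be an integer. The class of finite simple graphs admitting a closed neighborhood balanced $k$-coloring is not hereditary; that is, there exist a graph $H$ admitting a closed neighborhood balanced $k$-coloring and an induced subgraph of $H$ that admits no closed neighborhood balanced $k$-coloring.
   Context: For a vertex $v$ of a graph $G$, $N[v]=\{v\}\cup\{u : uv\in E(G)\}$ is its closed neighborhood. For an integer $k\ge 2$, a closed neighborhood balanced $k$-coloring of $G$ is a map $c: V(G)\to\{1,2,\dots,k\}$ such that for every vertex $v$ the numbers $|\{u\in N[v] : c(u)=i\}|$, $i=1,\dots,k$, are all equal. A class of graphs is hereditary if it is closed under taking induced subgraphs. *)

From mathcomp Require Import all_boot.
Set Implicit Arguments. Unset Strict Implicit. Unset Printing Implicit Defensive.

Definition simple_graph (T : finType) (e : rel T) : Prop :=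
  symmetric e /\ irreflexive e.

Definition cnbhd (T : finType) (e : rel T) (S : {set T}) (v : T) : {set T} :=
  [set u in S | (u == v) || e v u].

(* c is a closed neighborhood balanced k-coloring of the subgraph induced by S
   (colors of vertices outside S are irrelevant). *)
Definition cnb_coloring (k : nat) (T : finType) (e : rel T) (S : {set T})
  (c : T -> 'I_k) : Prop :=
  forall v, v \in S -> forall i j : 'I_k,
    #|[set u in cnbhd e S v | c u == i]| = #|[set u in cnbhd e S v | c u == j]|.

Definition has_cnb_coloring (k : nat) (T : finType) (e : rel T) (S : {set T}) : Prop :=
  exists c : T -> 'I_k, cnb_coloring e S c.

From mathcomp Require Import all_boot.
Set Implicit Arguments. Unset Strict Implicit. Unset Printing Implicit Defensive.

(* The colour classes of a closed neighbourhood partition it into k parts of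
   equal size, one of which contains the centre; so a closed neighbourhood
   has at least k vertices.  The complete graph on k vertices, coloured
   injectively, meets this bound everywhere, while its one-vertex induced
   subgraph violates it as soon as k >= 2. *)

Section BalancedColoring.

Variables (k : nat) (T : finType) (e : rel T) (S : {set T}) (c : T -> 'I_k).
Hypothesis balanced : cnb_coloring e S c.

Lemma card_cnbhd_balanced v (i : 'I_k) : v \in S ->
  #|cnbhd e S v| = k * #|[set u in cnbhd e S v | c u == i]|.
Proof.
move=> Sv; rewrite -sum1_card (partition_big c predT) //=.
rewrite -[k in k * _]card_ord -sum_nat_const; apply: eq_bigr => j _.
by rewrite -(balanced Sv j i) -sum1_card; apply: eq_bigl => u; rewrite inE.
Qed.

Lemma balanced_cnbhd_min v : v \in S -> k <= #|cnbhd e S v|.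
Proof.
move=> Sv; rewrite (card_cnbhd_balanced (c v) Sv) leq_pmulr // card_gt0.
by apply/set0Pn; exists v; rewrite !inE Sv !eqxx.
Qed.

End BalancedColoring.

Lemma cnbhd_set1 (T : finType) (e : rel T) (v : T) : cnbhd e [set v] v = [set v].
Proof. by apply/setP => u; rewrite !inE andb_idr // => /eqP ->; rewrite eqxx. Qed.

Lemma no_cnb_coloring_set1 k (T : finType) (e : rel T) (v : T) :
  2 <= k -> ~ has_cnb_coloring k e [set v].
Proof.
move=> k_ge2 [c balanced].
have := balanced_cnbhd_min balanced (set11 v).
by rewrite cnbhd_set1 cards1 leqNgt k_ge2.
Qed.

Definition complete_rel (T : finType) : rel T := fun x y => x != y.

Lemma complete_simple_graph (T : finType) : simple_graph (@complete_rel T).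
Proof. by split=> [x y | x]; rewrite /complete_rel; [rewrite eq_sym | rewrite eqxx]. Qed.

Lemma cnb_coloring_complete_id k : cnb_coloring (@complete_rel 'I_k) [set: 'I_k] id.
Proof.
move=> v _ i j.
have color_class l : [set u in cnbhd (@complete_rel 'I_k) [set: 'I_k] v | u == l] = [set l].
  by apply/setP => u; rewrite !inE /complete_rel [v == u]eq_sym orbN.
by rewrite !color_class !cards1.
Qed.

Theorem corollary2p7 (k : nat) (hk : 2 <= k) :
  exists (T : finType) (e : rel T),
    simple_graph e /\ has_cnb_coloring k e [set: T] /\
    exists S : {set T}, ~ has_cnb_coloring k e S.
Proof.
have v : 'I_k := Ordinal hk.
exists 'I_k, (@complete_rel 'I_k); split; first exact: complete_simple_graph.
split; first by exists id; apply: cnb_coloring_complete_id.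
by exists [set v]; apply: no_cnb_coloring_set1.
Qed.
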